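(* Let $(M,\rho)$ be a complete metric space, let $f:M\to\mathbb{R}\cup\{+\infty\}$ be proper, lower semicontinuous and bounded below, and let $g:M\to\mathbb{R}\cup\{+\infty\}$ be lower semicontinuous. Assume that for every $x\in\operatorname{dom}|\widetilde\nabla f|$ we have $x\in\operatorname{dom} g$ and $|\widetilde\nabla g|(x)\le|\widetilde\nabla f|(x)$. Then for every $\varepsilon>0$, every $x_0\in\operatorname{dom}|\widetilde\nabla f|$ and every $r\in(0,1)$ there exists $x\in\varepsilon\operatorname{Crit} f$ such that $$f(x)\le f(x_0)-\varepsilon\rho(x,x_0)\quad\text{and}\quad f(x_0)-rg(x_0)\ge f(x)-rg(x).$$ Moreover, for every $\varepsilon>0$ and $r\in(0,1)$, $$\inf_{x\in\operatorname{dom} f}(f(x)-rg(x))=\inf_{x\in\varepsilon\operatorname{Crit} f}(f(x)-rg(x)).$$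
   Context: $\operatorname{dom} f:=\{x:f(x)<+\infty\}$; on $\operatorname{dom} f$, $f(x)-rg(x)=-\infty$ if $g(x)=+\infty$. $[t]^+:=\max\{0,t\}$ (with $[f(x)-f(y)]^+:=0$ if $f(y)=+\infty$). For $x\in\operatorname{dom} f$, the global slope is $|\widetilde\nabla f|(x):=\sup_{y\neq x}\frac{[f(x)-f(y)]^+}{\rho(x,y)}\in[0,+\infty]$, and $\operatorname{dom}|\widetilde\nabla f|:=\{x\in\operatorname{dom} f:\ |\widetilde\nabla f|(x)<+\infty\}$. For $\varepsilon\ge0$, $\varepsilon\operatorname{Crit} f:=\{x\in\operatorname{dom} f:\ |\widetilde\nabla f|(x)\le\varepsilon\}$. *)

From HB Require Import structures.
From mathcomp Require Import all_boot all_order all_algebra.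
From mathcomp Require Import all_classical all_reals.
From mathcomp Require Import ereal.
Set Implicit Arguments. Unset Strict Implicit. Unset Printing Implicit Defensive.
Import Order.TTheory GRing.Theory Num.Theory.
Local Open Scope classical_set_scope.
Local Open Scope ring_scope.

Section Defs.
Variables (R : realType) (M : Type).

Definition is_metric (d : M -> M -> R) : Prop :=
  (forall x y, 0 <= d x y) /\
  (forall x y, d x y = 0 <-> x = y) /\
  (forall x y, d x y = d y x) /\
  (forall x y z, d x z <= d x y + d y z).

Definition metric_cauchy (d : M -> M -> R) (u : nat -> M) : Prop :=
  forall e : R, 0 < e -> exists N : nat, forall m n : nat,
    (N <= m)%N -> (N <= n)%N -> d (u m) (u n) < e.

Definition metric_converges (d : M -> M -> R) (u : nat -> M) (x : M) : Prop :=
  forall e : R, 0 < e -> exists N : nat, forall n : nat, (N <= n)%N -> d (u n) x < e.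

Definition metric_complete (d : M -> M -> R) : Prop :=
  forall u : nat -> M, metric_cauchy d u -> exists x, metric_converges d u x.

Definition metric_lsc (d : M -> M -> R) (f : M -> \bar R) : Prop :=
  forall x (t : R), (t%:E < f x)%E ->
    exists2 delta : R, 0 < delta & forall y, d x y < delta -> (t%:E < f y)%E.

(** f takes values in R ∪ {+oo}. *)
Definition no_minfty (f : M -> \bar R) : Prop := forall x, f x <> -oo%E.

Definition edom (f : M -> \bar R) : set M := [set x | (f x < +oo)%E].

Definition proper_fun (f : M -> \bar R) : Prop := exists x, (f x < +oo)%E.

Definition bounded_below (f : M -> \bar R) : Prop :=
  exists m : R, forall x, (m%:E <= f x)%E.

(** [f x - f y]^+, with the convention [f x - f y]^+ = 0 if f y = +oo. *)
Definition posdiff (f : M -> \bar R) (x y : M) : \bar R :=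
  match f x, f y with
  | EFin s, EFin t => (Num.max 0 (s - t))%:E
  | +oo%E, EFin _ => +oo%E
  | _, _ => 0%E
  end.

(** Global slope |~grad f|(x) = sup_{y <> x} [f x - f y]^+ / d x y, in [0,+oo].
    (0 is included in the supremum so that the value lies in [0,+oo] also
    when M = {x}; it does not change the value otherwise.) *)
Definition gslope (d : M -> M -> R) (f : M -> \bar R) (x : M) : \bar R :=
  ereal_sup ([set 0%E] `|`
    [set (posdiff f x y * ((d x y)^-1)%:E)%E | y in [set y | y <> x]]).

Definition dom_gslope (d : M -> M -> R) (f : M -> \bar R) : set M :=
  [set x | (f x < +oo)%E /\ (gslope d f x < +oo)%E].

Definition eCrit (d : M -> M -> R) (eps : R) (f : M -> \bar R) : set M :=
  [set x | (f x < +oo)%E /\ (gslope d f x <= eps%:E)%E].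

End Defs.

From HB Require Import structures.
From mathcomp Require Import all_boot all_order all_algebra.
From mathcomp Require Import all_classical all_reals.
From mathcomp Require Import ereal.
From mathcomp Require Import lra.
Import Order.TTheory GRing.Theory Num.Theory.
Local Open Scope classical_set_scope.
Local Open Scope ring_scope.

(* Ekeland's principle with constant lam turns a point x0 of dom f into a point x1 with
   f x1 + lam d(x0,x1) <= f x0 whose global slope is at most lam.  Starting from slope s0 and
   taking lam = max(eps, r s0), the slope comparison for g gives
   r (g x0 - g x1) <= r s0 d(x0,x1) <= f x0 - f x1, so f - r g does not increase while the
   slope bound shrinks geometrically until it drops below eps.  For the infimum, lower
   semicontinuity of g at x in dom f lets an Ekeland point with large lam stay so close to x
   that g does not drop much; descending from there reaches eps Crit f. *)

Lemma no_minfty_fineK {R : realType} {M : Type} {f : M -> \bar R} {x : M} :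
  no_minfty f -> (f x < +oo)%E -> f x = (fine (f x))%:E.
Proof. by move=> nf; case E: (f x) => [r||] //; move: (nf x); rewrite E. Qed.

Lemma lee_EFin_fine {R : realType} {a : \bar R} {c : R} :
  a <> -oo%E -> (a <= c%:E)%E -> (a < +oo)%E /\ fine a <= c.
Proof. by case: a => [a| |] //= _; rewrite lee_fin ltry. Qed.

Lemma exists_invn_lt {R : realType} (c : R) : 0 < c ->
  exists n : nat, (n.+1%:R)^-1 < c.
Proof.
move=> c0; exists (Num.bound c^-1).
have /archi_boundP ci : 0 <= c^-1 by rewrite invr_ge0 ltW.
rewrite -[X in _ < X](invrK c) ltf_pV2 ?posrE ?invr_gt0 //.
by apply: lt_trans ci _; rewrite ltr_nat.
Qed.

Lemma bernoulli_ineq {R : realType} {q : R} :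
  1 <= q -> forall n : nat, 1 + n%:R * (q - 1) <= q ^+ n.
Proof.
move=> q1; elim=> [|n IH]; first by rewrite mul0r addr0 expr0.
have : 1 <= q ^+ n by rewrite exprn_ege1.
rewrite exprS -natr1; nra.
Qed.

Lemma exists_expr_mul_le {R : realType} {r eps : R} (s : R) :
  0 < r < 1 -> 0 < eps -> exists N : nat, r ^+ N * s <= eps.
Proof.
move=> /andP[r0 r1] eps0; pose q := r^-1.
have q1 : 1 < q by rewrite invf_gt1.
have epq : 0 < eps * (q - 1) by rewrite mulr_gt0 // subr_gt0.
pose K := Num.max 0 (s / (eps * (q - 1))).
have /archi_boundP hK : 0 <= K by rewrite le_max lexx.
exists (Num.bound K); set N := Num.bound K in hK *.
have qN0 : 0 < q ^+ N by rewrite exprn_gt0 // (lt_trans ltr01).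
have -> : r ^+ N = (q ^+ N)^-1 by rewrite exprVn invrK.
rewrite mulrC ler_pdivrMr //.
have hb := bernoulli_ineq (ltW q1) N.
have hs : s <= N%:R * (eps * (q - 1)).
  by rewrite -ler_pdivrMr //; apply: le_trans (ltW hK); rewrite le_max lexx orbT.
nra.
Qed.

Lemma lee_EFin_gt {R : realType} (a b : \bar R) :
  (forall t : R, (a < t%:E)%E -> (b <= t%:E)%E) -> (b <= a)%E.
Proof.
case: a => [a| |] H; first (case: b H => [b| |] H; last by rewrite leNye).
- rewrite lee_fin leNgt; apply/negP => ab.
  by have := H ((a + b) / 2); rewrite !lte_fin lee_fin; lra.
- by have := H (a + 1); rewrite lte_fin ltrDl ltr01 => /(_ isT).
- exact: leey.
- case: b H => [b| |] H //.
  + by exfalso; have := H (b - 1) (ltNyr _); rewrite lee_fin; lra.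
  + by have := H 0 (ltNyr _).
Qed.

Section Metric.
Variables (R : realType) (M : Type) (d : M -> M -> R).
Hypothesis dm : is_metric d.

Lemma metric_ge0 x y : 0 <= d x y.
Proof. by case: dm. Qed.

Lemma metric_xx x : d x x = 0.
Proof. by case: dm => _ [dE _]; apply/dE. Qed.

Lemma metric_gt0 {x y} : x <> y -> 0 < d x y.
Proof.
case: dm => d0 [dE _] xy; rewrite lt_neqAle d0 andbT.
by apply/eqP => /esym /dE.
Qed.

Lemma metric_sym x y : d x y = d y x.
Proof. by case: dm => _ [_ []]. Qed.

Lemma metric_triangle x y z : d x z <= d x y + d y z.
Proof. by case: dm => _ [_ [_]]. Qed.

Lemma gslope_ge0 (f : M -> \bar R) x : (0 <= gslope d f x)%E.
Proof. by apply: ereal_sup_ubound; left. Qed.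

Lemma posdiff_le_gslope (f : M -> \bar R) {x y} : y <> x ->
  (posdiff f x y * ((d x y)^-1)%:E <= gslope d f x)%E.
Proof. by move=> yx; apply: ereal_sup_ubound; right; exists y. Qed.

Lemma dom_gslope_fineK {f : M -> \bar R} {x : M} :
  dom_gslope d f x -> gslope d f x = (fine (gslope d f x))%:E.
Proof. by case=> _; have := gslope_ge0 f x; case: (gslope d f x). Qed.

Lemma gslope_le_of_strict_min {f : M -> \bar R} {x : M} {lam : R} :
  no_minfty f -> (f x < +oo)%E -> 0 <= lam ->
  (forall y, y <> x -> ((fine (f x) - lam * d x y)%:E < f y)%E) ->
  (gslope d f x <= lam%:E)%E.
Proof.
move=> nf fx lam0 xmin; apply: ge_ereal_sup => _ [->|[y yx <-]]; first by rewrite lee_fin.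
have dxy := metric_gt0 (nesym yx).
have := xmin y yx; rewrite /posdiff (no_minfty_fineK nf fx).
case: (f y) (nf y) => [t| |] //= _; last by rewrite mul0e lee_fin.
rewrite lte_fin -EFinM lee_fin ler_pdivrMr // ge_max => ht.
by rewrite mulr_ge0 ?(ltW dxy) //=; move: ht; rewrite lerBlDr ltrBlDr addrC => /ltW.
Qed.

Lemma sub_le_gslope_mul {g : M -> \bar R} {x y : M} {s : R} :
  no_minfty g -> (g x < +oo)%E -> (g y < +oo)%E -> (gslope d g x <= s%:E)%E ->
  fine (g x) - fine (g y) <= s * d x y.
Proof.
move=> ng gx gy gs; have [->|yx] := pselect (y = x).
  by rewrite metric_xx subrr mulr0.
have := le_trans (posdiff_le_gslope g yx) gs.
rewrite /posdiff (no_minfty_fineK ng gx) (no_minfty_fineK ng gy) /= -EFinM lee_fin.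
have dxy := metric_gt0 (nesym yx).
by rewrite ler_pdivrMr // ge_max => /andP[].
Qed.

Section Ekeland.
Variable f : M -> \bar R.
Hypotheses (dcomp : metric_complete d) (nf : no_minfty f)
  (flsc : metric_lsc d f) (fbb : bounded_below f).

Section Principle.
Variable lam : R.
Hypothesis lam0 : 0 < lam.

Definition ekeland_le x y : Prop :=
  (f y < +oo)%E /\ fine (f y) + lam * d x y <= fine (f x).

Lemma ekeland_le_refl x : (f x < +oo)%E -> ekeland_le x x.
Proof. by move=> fx; split; rewrite // metric_xx mulr0 addr0. Qed.

Lemma ekeland_le_trans {x y z} : ekeland_le x y -> ekeland_le y z -> ekeland_le x z.
Proof.
move=> [_ xy] [fz yz]; split=> //.
have := ler_wpM2l (ltW lam0) (metric_triangle x y z); rewrite mulrDr; lra.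
Qed.

Lemma ekeland_le_near_inf {x e} : (f x < +oo)%E -> 0 < e ->
  exists y, ekeland_le x y /\ forall z, ekeland_le x z -> fine (f y) <= fine (f z) + e.
Proof.
move=> fx e0; have [m fm] := fbb.
have hinf : has_inf [set fine (f z) | z in ekeland_le x].
  split; first by exists (fine (f x)), x => //; apply: ekeland_le_refl.
  exists m => _ [z [fz _] <-].
  by have := fm z; rewrite (no_minfty_fineK nf fz) lee_fin.
have [_ [y xy <-] hy] := inf_adherent e0 hinf.
exists y; split=> // z xz; apply: le_trans (ltW hy) _; rewrite lerD2r.
exact: ge_inf hinf.2 _ (ex_intro2 _ _ z xz erefl).
Qed.

Lemma ekeland_sequence {x0} : (f x0 < +oo)%E -> exists u : nat -> M,
  [/\ u 0%N = x0, forall n k, (n <= k)%N -> ekeland_le (u n) (u k)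
    & forall n z, ekeland_le (u n.+1) z -> lam * d (u n.+1) z <= (n.+1%:R)^-1].
Proof.
move=> fx0.
(* quantified over all x, so that [choice] yields a total successor map *)
have step n x : exists y, (f x < +oo)%E -> ekeland_le x y /\
    forall z, ekeland_le x z -> fine (f y) <= fine (f z) + (n.+1%:R)^-1.
  have [fx|] := pselect (f x < +oo)%E; last by exists x.
  have [|y hy] := @ekeland_le_near_inf x n.+1%:R^-1 fx; first by rewrite invr_gt0.
  by exists y.
have [next hnext] := choice (fun p : nat * M => step p.1 p.2).
pose u := fix u n := if n is k.+1 then next (k, u k) else x0.
have fu n : (f (u n) < +oo)%E.
  by elim: n => [|n IH] //=; have [[]] := hnext (n, u n) IH.
have u_succ n : ekeland_le (u n) (u n.+1) := (hnext (n, u n) (fu n)).1.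
exists u; split=> //.
  move=> n k /subnKC <-; elim: (k - n)%N => [|j IH].
    by rewrite addn0; apply: ekeland_le_refl.
  by rewrite addnS; apply: ekeland_le_trans IH (u_succ _).
move=> n z uz.
have := (hnext (n, u n) (fu n)).2 z (ekeland_le_trans (u_succ n) uz).
by case: uz => _ /= hz h2; have := le_trans hz h2; rewrite lerD2l.
Qed.

Lemma ekeland_sequence_cauchy {u} :
  (forall n k, (n <= k)%N -> ekeland_le (u n) (u k)) ->
  (forall n z, ekeland_le (u n.+1) z -> lam * d (u n.+1) z <= (n.+1%:R)^-1) ->
  metric_cauchy d u.
Proof.
move=> chain small e e0.
have [|N] := @exists_invn_lt _ (lam * e / 2); first by rewrite divr_gt0 ?mulr_gt0.
set b := _^-1 => hN; exists N.+1 => p q hp hq.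
have h1 := small N (u p) (chain _ _ hp); have h2 := small N (u q) (chain _ _ hq).
have := ler_wpM2l (ltW lam0) (metric_triangle (u p) (u N.+1) (u q)).
rewrite metric_sym mulrDr -/b in h1 h2 * => h3.
rewrite -(ltr_pM2l lam0); lra.
Qed.

Lemma lsc_le_of_cvg {u x} (c : R) : metric_converges d u x ->
  (forall e, 0 < e -> exists N, forall k, (N <= k)%N -> (f (u k) <= (c + e)%:E)%E) ->
  (f x <= c%:E)%E.
Proof.
move=> ux fu; apply: lee_EFin_gt => t ct; rewrite leNgt; apply/negP => tfx.
have [del del0 hdel] := flsc _ _ tfx.
have [N1 hN1] := ux del del0.
have [|N2 hN2] := fu ((t - c) / 2); first by rewrite divr_gt0 // subr_gt0 -lte_fin.
pose k := maxn N1 N2.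
have := hdel (u k); rewrite metric_sym => /(_ (hN1 k (leq_maxl _ _))).
rewrite ltNge => /negP; apply; apply: le_trans (hN2 k (leq_maxr _ _)) _.
by rewrite lte_fin in ct; rewrite lee_fin; lra.
Qed.

Lemma ekeland_le_lim {u x} :
  (forall n k, (n <= k)%N -> ekeland_le (u n) (u k)) -> metric_converges d u x ->
  forall n, ekeland_le (u n) x.
Proof.
move=> chain ux n; pose c := fine (f (u n)) - lam * d (u n) x.
suff /(lee_EFin_fine (nf x)) [fx hx] : (f x <= c%:E)%E by split=> //; rewrite /c in hx; lra.
apply: (lsc_le_of_cvg _ ux) => e e0.
have [N hN] := ux (e / lam) (divr_gt0 e0 lam0).
exists (maxn n N) => k; rewrite geq_max => /andP[nk Nk].
have [fk hk] := chain n k nk; have := hN k Nk; rewrite ltr_pdivlMr // => hd.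
have := ler_wpM2l (ltW lam0) (metric_triangle (u n) (u k) x); rewrite mulrDr.
rewrite (no_minfty_fineK nf fk) lee_fin /c; lra.
Qed.

Theorem ekeland_variational {x0} : (f x0 < +oo)%E -> exists x, ekeland_le x0 x /\
  forall y, y <> x -> ((fine (f x) - lam * d x y)%:E < f y)%E.
Proof.
move=> fx0; have [u [u0 chain small]] := ekeland_sequence fx0.
have [x ux] := dcomp u (ekeland_sequence_cauchy chain small).
have ulim := ekeland_le_lim chain ux.
exists x; split; first by rewrite -u0.
move=> y yx; rewrite ltNge; apply/negP => /(lee_EFin_fine (nf y)) [fy hy].
have xy : ekeland_le x y by split=> //; lra.
have [|n] := @exists_invn_lt _ (lam * d x y / 2).
  by rewrite divr_gt0 ?mulr_gt0 ?metric_gt0 // => /esym.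
set b := _^-1 => hn.
have h1 := small n x (ulim n.+1).
have h2 := small n y (ekeland_le_trans (ulim n.+1) xy).
have := ler_wpM2l (ltW lam0) (metric_triangle x (u n.+1) y).
rewrite mulrDr metric_sym -/b in h1 h2 * => h3.
have : b < b by lra.
by rewrite ltxx.
Qed.

Corollary ekeland_gslope {x0} : (f x0 < +oo)%E ->
  exists x, [/\ dom_gslope d f x, (gslope d f x <= lam%:E)%E & ekeland_le x0 x].
Proof.
move=> fx0; have [x [x0x xmin]] := ekeland_variational fx0.
have fx : (f x < +oo)%E by case: x0x.
have sx := gslope_le_of_strict_min nf fx (ltW lam0) xmin.
by exists x; split=> //; split=> //; apply: le_lt_trans sx (ltry _).
Qed.

End Principle.

Lemma dom_gslope_dense x (delta : R) : (f x < +oo)%E -> 0 < delta ->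
  exists y, [/\ dom_gslope d f y, fine (f y) <= fine (f x) & d x y < delta].
Proof.
move=> fx del0; have [m fm] := fbb.
have mf y : (f y < +oo)%E -> m <= fine (f y).
  by move=> fy; have := fm y; rewrite (no_minfty_fineK nf fy) lee_fin.
pose lam := (fine (f x) - m + 1) / delta.
have lam0 : 0 < lam by rewrite divr_gt0 //; have := mf x fx; lra.
have [y [dy _ [fy hy]]] := ekeland_gslope _ lam0 fx.
have dxy := mulr_ge0 (ltW lam0) (metric_ge0 x y).
exists y; split=> //; first by lra.
rewrite -(ltr_pM2l lam0) [lam * delta]divfK ?gt_eqF //.
by have := mf y fy; lra.
Qed.

End Ekeland.

Section Descent.
Variables (f g : M -> \bar R) (eps r : R).
Hypotheses (dcomp : metric_complete d) (nf : no_minfty f) (flsc : metric_lsc d f)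
  (fbb : bounded_below f) (ng : no_minfty g)
  (hgf : forall x, dom_gslope d f x ->
     (g x < +oo)%E /\ (gslope d g x <= gslope d f x)%E)
  (eps0 : 0 < eps) (hr : 0 < r < 1).

Definition descent x0 x : Prop :=
  (f x <= f x0 - (eps * d x x0)%:E)%E /\ (f x - r%:E * g x <= f x0 - r%:E * g x0)%E.

Lemma descent_refl x : descent x x.
Proof. by split; rewrite // metric_xx mulr0 sube0. Qed.

Lemma descent_trans {x0 x1 x} :
  (f x0 < +oo)%E -> descent x0 x1 -> descent x1 x -> descent x0 x.
Proof.
move=> fx0 [h01 g01] [h1 g1]; split; last exact: le_trans g1 g01.
move: h01; rewrite (no_minfty_fineK nf fx0) -EFinB => /(lee_EFin_fine (nf x1)) [fx1 h01].
move: h1; rewrite (no_minfty_fineK nf fx1) -EFinB => /(lee_EFin_fine (nf x)) [fx h1].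
rewrite (no_minfty_fineK nf fx) -EFinB lee_fin.
have := ler_wpM2l (ltW eps0) (metric_triangle x x1 x0); lra.
Qed.

Lemma descent_step {x0} : dom_gslope d f x0 -> exists x1, [/\ dom_gslope d f x1,
  fine (gslope d f x1) <= Num.max eps (r * fine (gslope d f x0)) & descent x0 x1].
Proof.
move=> dx0; have [fx0 _] := dx0; have /andP[r0 _] := hr.
set s0 := fine (gslope d f x0); set lam := Num.max eps (r * s0).
have lam0 : 0 < lam by rewrite lt_max eps0.
have [x1 [dx1 sx1 [fx1 h01]]] := ekeland_gslope f dcomp nf flsc fbb _ lam0 fx0.
exists x1; split=> //; first by rewrite -lee_fin -(dom_gslope_fineK dx1).
have [gx0 gs0] := hgf x0 dx0; have [gx1 _] := hgf x1 dx1.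
have hg : fine (g x0) - fine (g x1) <= s0 * d x0 x1.
  by apply: sub_le_gslope_mul ng gx0 gx1 _; rewrite /s0 -(dom_gslope_fineK dx0).
have d01 := metric_ge0 x0 x1.
have h_eps : eps * d x0 x1 <= lam * d x0 x1 by rewrite ler_wpM2r // le_max lexx.
have h_rs0 : r * s0 * d x0 x1 <= lam * d x0 x1 by rewrite ler_wpM2r // le_max lexx orbT.
have h_rg := ler_wpM2l (ltW r0) hg.
rewrite /descent (no_minfty_fineK nf fx1) (no_minfty_fineK nf fx0).
rewrite (no_minfty_fineK ng gx1) (no_minfty_fineK ng gx0) [d x1 x0]metric_sym.
by rewrite -!EFinM -!EFinB !lee_fin; split; lra.
Qed.

Lemma descent_to_eCrit (N : nat) x0 : dom_gslope d f x0 ->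
  r ^+ N * fine (gslope d f x0) <= eps -> exists x, eCrit d eps f x /\ descent x0 x.
Proof.
have /andP[r0 r1] := hr.
elim: N x0 => [|N IH] x0 dx0 hs.
  exists x0; split; last exact: descent_refl.
  by split; [case: dx0 | rewrite (dom_gslope_fineK dx0) lee_fin -[fine _]mul1r -(expr0 r)].
have [x1 [dx1 s1 d01]] := descent_step dx0.
have [|x [cx d1x]] := IH x1 dx1; last by exists x; split; [| apply: descent_trans dx0.1 d01 d1x].
have rN0 : 0 <= r ^+ N by rewrite exprn_ge0 ?ltW.
apply: le_trans (ler_wpM2l rN0 s1) _.
rewrite maxr_pMr // ge_max mulrA -exprSr hs andbT.
by apply: ler_piMl; rewrite ?exprn_ile1 ?ltW.
Qed.

Lemma exists_eCrit_descent {x0} : dom_gslope d f x0 ->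
  exists x, eCrit d eps f x /\ descent x0 x.
Proof.
move=> dx0; have [N hN] := exists_expr_mul_le (fine (gslope d f x0)) hr eps0.
exact: descent_to_eCrit dx0 hN.
Qed.

Hypothesis glsc : metric_lsc d g.

Lemma ereal_inf_eCrit :
  ereal_inf [set (f x - r%:E * g x)%E | x in edom f] =
  ereal_inf [set (f x - r%:E * g x)%E | x in eCrit d eps f].
Proof.
have /andP[r0 _] := hr.
apply/eqP; rewrite eq_le; apply/andP; split.
  by apply: ereal_inf_le_tmp => _ [x [fx _] <-]; exists x.
apply: le_ereal_inf_tmp => _ [x fx <-]; apply: lee_EFin_gt => t ht.
pose c := r^-1 * (fine (f x) - t).
have gxc : (c%:E < g x)%E.
  move: ht; rewrite (no_minfty_fineK nf fx).
  case: (g x) (ng x) => [gx _| _ _|//]; last exact: ltry.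
  rewrite -EFinM -EFinB !lte_fin /c => h; rewrite mulrC ltr_pdivrMr //; lra.
have [del del0 hdel] := glsc _ _ gxc.
have [y [dy fyx dxy]] := dom_gslope_dense f dcomp nf flsc fbb _ _ fx del0.
have [z [cz [_ hz]]] := exists_eCrit_descent dy.
apply: le_trans (ereal_inf_lbound (ex_intro2 _ _ z cz erefl)) _.
apply: le_trans hz _.
have [fy _] := dy; have [gy _] := hgf y dy; have := hdel y dxy.
rewrite (no_minfty_fineK nf fy) (no_minfty_fineK ng gy) -EFinM -EFinB lte_fin lee_fin.
rewrite -(ltr_pM2l r0) /c mulrA divff ?gt_eqF // mul1r; lra.
Qed.

End Descent.
End Metric.

Theorem theorem3p8 (R : realType) (M : Type) (d : M -> M -> R)
  (f g : M -> \bar R) :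
  is_metric d -> metric_complete d ->
  no_minfty f -> proper_fun f -> metric_lsc d f -> bounded_below f ->
  no_minfty g -> metric_lsc d g ->
  (forall x, dom_gslope d f x ->
     (g x < +oo)%E /\ (gslope d g x <= gslope d f x)%E) ->
  (forall (eps : R), 0 < eps -> forall x0, dom_gslope d f x0 ->
     forall r : R, 0 < r < 1 ->
     exists x, eCrit d eps f x /\
       (f x <= f x0 - (eps * d x x0)%:E)%E /\
       (f x - r%:E * g x <= f x0 - r%:E * g x0)%E) /\
  (forall (eps r : R), 0 < eps -> 0 < r < 1 ->
     ereal_inf [set (f x - r%:E * g x)%E | x in edom f] =
     ereal_inf [set (f x - r%:E * g x)%E | x in eCrit d eps f]).
Proof.
move=> dm dcomp nf _ flsc fbb ng glsc hgf; split.
  move=> eps eps0 x0 dx0 r hr.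
  exact: exists_eCrit_descent dm f g eps r dcomp nf flsc fbb ng hgf eps0 hr x0 dx0.
move=> eps r eps0 hr.
exact: ereal_inf_eCrit dm f g eps r dcomp nf flsc fbb ng hgf eps0 hr glsc.
Qed.
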